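(* Let $c>1$ be an irrational number, and for a positive integer $m$ let $x=[cm]$. Then, as $m\to\infty$, $$\int_1^x \frac{[c^{-1}([t]+1)]}{t^2}\,dt = \frac{1}{c}(\log m + \log c + \gamma) -\sum_{n=1}^\infty \frac{\{c^{-1}(n+1)\}}{n(n+1)} + O\left(\frac{1}{m}\right),$$ where $\gamma$ is Euler's constant.
   Context: $[x]$ is the greatest integer not exceeding $x$ and $\{x\}=x-[x]$. *)

From Stdlib Require Import Reals.
From Coquelicot Require Import Coquelicot.
Open Scope R_scope.

Definition fl (x : R) : R := IZR (Int_part x).
Definition frc (x : R) : R := x - fl x.

Definition euler_gamma : R :=
  real (Lim_seq (fun n : nat => sum_f_R0 (fun k => / INR (k + 1)) n - ln (INR (n + 1)))).

Definition irrational (c : R) : Prop :=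
  forall p q : Z, q <> 0%Z -> c <> IZR p / IZR q.

(* Splitting [1, x] at the integers, the integrand is [c^-1 (k+2)] / t^2 on
   [k+1, k+2], so with [y] = y - {y} the integral up to the integer x = q+2 is
   c^-1 H_(q+1) minus a partial sum of the series.  Both the harmonic sum
   (via the monotone sequences H_n - ln n and H_n - ln n - 1/n enclosing gamma)
   and the series (via the telescoping majorant 1/(k+1) - 1/(k+2)) are then
   within O(1/q) of their limits, and ln(cm) - ln(q+1) = O(1/q) because
   cm < q+3. *)
From Stdlib Require Import Reals Lra Lia.
From Coquelicot Require Import Coquelicot.
Open Scope R_scope.

Lemma ln_sub_le_div_sub1 (a b : R) : 0 < a -> 0 < b -> ln b - ln a <= b / a - 1.
Proof.
  intros Ha Hb.
  assert (Hba : 0 < b / a) by (apply Rdiv_lt_0_compat; lra).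
  replace b with (a * (b / a)) at 1 by (field; lra).
  rewrite ln_mult by lra.
  pose proof (exp_ineq1_le (ln (b / a))) as Hexp. rewrite exp_ln in Hexp by lra.
  lra.
Qed.

Lemma Lim_seq_bounds (u : nat -> R) (N : nat) (lo hi : R) :
  (forall n, (N <= n)%nat -> lo <= u n <= hi) -> lo <= real (Lim_seq u) <= hi.
Proof.
  intros Hu.
  assert (Hlo : Rbar_le (Lim_seq (fun _ => lo)) (Lim_seq u)).
  { apply Lim_seq_le_loc. exists N. intros n Hn. apply Hu; lia. }
  assert (Hhi : Rbar_le (Lim_seq u) (Lim_seq (fun _ => hi))).
  { apply Lim_seq_le_loc. exists N. intros n Hn. apply Hu; lia. }
  rewrite Lim_seq_const in Hlo, Hhi.
  destruct (Lim_seq u); simpl in *; try contradiction; lra.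
Qed.

Lemma Int_part_eq (z : Z) (r : R) : IZR z <= r < IZR z + 1 -> Int_part r = z.
Proof.
  intros [Hl Hr]. destruct (base_Int_part r) as [Bl Br].
  assert (Hup : IZR (Int_part r) < IZR (z + 1)) by (rewrite plus_IZR; lra).
  assert (Hdn : IZR (z - 1) < IZR (Int_part r)) by (rewrite minus_IZR; lra).
  apply lt_IZR in Hup. apply lt_IZR in Hdn. lia.
Qed.

Lemma fl_nat_ge2 (x : R) : 2 <= x ->
  exists q : nat, fl x = INR (q + 2) /\ INR (q + 2) <= x < INR (q + 2) + 1.
Proof.
  intros Hx. destruct (base_Int_part x) as [Bl Br].
  assert (Hz : (1 < Int_part x)%Z) by (apply lt_IZR; lra).
  exists (Z.to_nat (Int_part x) - 2)%nat.
  assert (E : fl x = INR (Z.to_nat (Int_part x) - 2 + 2)).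
  { unfold fl. rewrite INR_IZR_INZ. f_equal. lia. }
  rewrite <- E. unfold fl. lra.
Qed.

Lemma frc_bounds (y : R) : 0 <= frc y < 1.
Proof. unfold frc, fl. destruct (base_Int_part y). lra. Qed.

Lemma INR_add1_pos (n : nat) : 0 < INR (n + 1).
Proof. rewrite plus_INR; simpl; pose proof (pos_INR n); lra. Qed.

Lemma INR_add2 (n : nat) : INR (n + 2) = INR (n + 1) + 1.
Proof. rewrite <- S_INR; f_equal; lia. Qed.

Definition harmonic (n : nat) : R := sum_f_R0 (fun k => / INR (k + 1)) n.

Definition euler_seq (n : nat) : R := harmonic n - ln (INR (n + 1)).

Lemma harmonic_S (n : nat) : harmonic (S n) = harmonic n + / (INR (n + 1) + 1).
Proof.
  unfold harmonic; rewrite tech5, <- INR_add2.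
  replace (S n + 1)%nat with (n + 2)%nat by lia. reflexivity.
Qed.

Lemma euler_seq_decr (n : nat) : euler_seq (S n) <= euler_seq n.
Proof.
  unfold euler_seq. rewrite harmonic_S.
  replace (INR (S n + 1)) with (INR (n + 1) + 1) by (rewrite <- INR_add2; f_equal; lia).
  pose proof (INR_add1_pos n).
  pose proof (ln_sub_le_div_sub1 (INR (n + 1) + 1) (INR (n + 1)) ltac:(lra) ltac:(lra)).
  replace (INR (n + 1) / (INR (n + 1) + 1) - 1) with (- / (INR (n + 1) + 1)) in *
    by (field; lra).
  lra.
Qed.

Lemma euler_seq_sub_inv_incr (n : nat) :
  euler_seq n - / INR (n + 1) <= euler_seq (S n) - / INR (S n + 1).
Proof.
  unfold euler_seq. rewrite harmonic_S.
  replace (INR (S n + 1)) with (INR (n + 1) + 1) by (rewrite <- INR_add2; f_equal; lia).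
  pose proof (INR_add1_pos n).
  pose proof (ln_sub_le_div_sub1 (INR (n + 1)) (INR (n + 1) + 1) ltac:(lra) ltac:(lra)).
  replace ((INR (n + 1) + 1) / INR (n + 1) - 1) with (/ INR (n + 1)) in *
    by (field; lra).
  lra.
Qed.

Lemma euler_gamma_bounds (N : nat) :
  euler_seq N - / INR (N + 1) <= euler_gamma <= euler_seq N.
Proof.
  apply (Lim_seq_bounds euler_seq N). intros n Hn.
  assert (Hmono : euler_seq N - / INR (N + 1) <= euler_seq n - / INR (n + 1)
                  /\ euler_seq n <= euler_seq N).
  { induction Hn as [|n Hn IH]; [lra|].
    pose proof (euler_seq_decr n). pose proof (euler_seq_sub_inv_incr n). lra. }
  pose proof (Rinv_0_lt_compat _ (INR_add1_pos n)). lra.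
Qed.

Lemma Series_partial_sum_bounds (a : nat -> R) (N : nat) :
  (forall k, 0 <= a k <= / (INR (k + 1) * INR (k + 2))) ->
  sum_f_R0 a N <= Series a <= sum_f_R0 a N + / INR (N + 2).
Proof.
  intros Ha. unfold Series.
  apply (Lim_seq_bounds _ N). intros n Hn. rewrite sum_n_Reals.
  (* the majorant telescopes: 1/((k+1)(k+2)) = 1/(k+1) - 1/(k+2) *)
  assert (Htel : sum_f_R0 a N <= sum_f_R0 a n
                 <= sum_f_R0 a N + / INR (N + 2) - / INR (n + 2)).
  { induction Hn as [|n Hn IH]; [lra|].
    rewrite tech5. specialize (Ha (S n)).
    replace (INR (S n + 1)) with (INR (n + 2)) in Ha by (f_equal; lia).
    replace (INR (S n + 2)) with (INR (n + 2) + 1) in *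
      by (rewrite <- S_INR; f_equal; lia).
    rewrite !INR_add2 in *. pose proof (INR_add1_pos n).
    replace (/ ((INR (n + 1) + 1) * (INR (n + 1) + 1 + 1)))
      with (/ (INR (n + 1) + 1) - / (INR (n + 1) + 1 + 1)) in Ha by (field; lra).
    assert (0 < / (INR (n + 1) + 1 + 1)) by (apply Rinv_0_lt_compat; lra).
    lra. }
  assert (0 < / INR (n + 2)) by (apply Rinv_0_lt_compat; rewrite INR_add2;
                                 pose proof (INR_add1_pos n); lra).
  lra.
Qed.

Lemma is_RInt_scal_inv_sq (K a b : R) : 0 < a <= b ->
  is_RInt (fun t => K / t ^ 2) a b (K * (/ a - / b)).
Proof.
  intros Hab.
  replace (K * (/ a - / b)) with (minus ((fun t => - K / t) b) ((fun t => - K / t) a))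
    by (unfold minus, plus, opp; simpl; field; lra).
  apply (is_RInt_derive (fun t => - K / t)).
  - intros x Hx. rewrite Rmin_left, Rmax_right in Hx by lra.
    auto_derive; [lra | field; lra].
  - intros x Hx. rewrite Rmin_left, Rmax_right in Hx by lra.
    apply (ex_derive_continuous (V := R_NormedModule)). auto_derive.
    repeat split; try lra; intro; nra.
Qed.

Section BeattyIntegral.

Variable c : R.
Hypothesis hc1 : 1 < c.

Definition beatty_integrand (t : R) : R := fl (/ c * (fl t + 1)) / t ^ 2.

Definition beatty_step (k : nat) : R :=
  fl (/ c * (INR (k + 1) + 1)) / (INR (k + 1) * INR (k + 2)).

Definition frac_coef (k : nat) : R :=
  frc (/ c * (INR (k + 1) + 1)) / (INR (k + 1) * INR (k + 2)).

Lemma is_RInt_beatty_step (k : nat) :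
  is_RInt beatty_integrand (INR (k + 1)) (INR (k + 2)) (beatty_step k).
Proof.
  rewrite INR_add2. pose proof (INR_add1_pos k).
  apply is_RInt_ext with (f := fun t => fl (/ c * (INR (k + 1) + 1)) / t ^ 2).
  - intros x Hx. rewrite Rmin_left, Rmax_right in Hx by lra.
    unfold beatty_integrand.
    replace (fl x) with (INR (k + 1)); [reflexivity|].
    unfold fl. rewrite INR_IZR_INZ. f_equal. symmetry. apply Int_part_eq.
    rewrite <- INR_IZR_INZ. lra.
  - unfold beatty_step. rewrite INR_add2.
    replace (fl (/ c * (INR (k + 1) + 1)) / (INR (k + 1) * (INR (k + 1) + 1)))
      with (fl (/ c * (INR (k + 1) + 1)) * (/ INR (k + 1) - / (INR (k + 1) + 1)))
      by (field; lra).
    apply is_RInt_scal_inv_sq. lra.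
Qed.

Lemma is_RInt_beatty_nat (q : nat) :
  is_RInt beatty_integrand 1 (INR (q + 2)) (sum_f_R0 beatty_step q).
Proof.
  induction q as [|q IH].
  - exact (is_RInt_beatty_step 0).
  - apply (is_RInt_Chasles (V := R_NormedModule) _ 1 (INR (q + 2)) _ _ _ IH).
    replace (INR (q + 2)) with (INR (S q + 1)) by (f_equal; lia).
    exact (is_RInt_beatty_step (S q)).
Qed.

Lemma beatty_step_split (k : nat) :
  beatty_step k = / c * / INR (k + 1) - frac_coef k.
Proof.
  unfold beatty_step, frac_coef, frc. rewrite INR_add2.
  pose proof (INR_add1_pos k). field. split; lra.
Qed.

Lemma frac_coef_bounds (k : nat) :
  0 <= frac_coef k <= / (INR (k + 1) * INR (k + 2)).
Proof.
  unfold frac_coef. pose proof (frc_bounds (/ c * (INR (k + 1) + 1))).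
  rewrite INR_add2. pose proof (INR_add1_pos k).
  assert (0 < / (INR (k + 1) * (INR (k + 1) + 1))) by (apply Rinv_0_lt_compat; nra).
  unfold Rdiv. nra.
Qed.

Lemma RInt_beatty_nat (q : nat) :
  RInt beatty_integrand 1 (INR (q + 2)) = / c * harmonic q - sum_f_R0 frac_coef q.
Proof.
  assert (Hsum : sum_f_R0 beatty_step q = / c * harmonic q - sum_f_R0 frac_coef q).
  { unfold harmonic. induction q as [|q IH]; [|rewrite !tech5].
    - apply beatty_step_split.
    - rewrite IH, beatty_step_split. ring. }
  rewrite <- Hsum. exact (is_RInt_unique _ _ _ _ (is_RInt_beatty_nat q)).
Qed.

Lemma beatty_error_bound (q : nat) (x : R) :
  INR (q + 2) <= x < INR (q + 2) + 1 ->
  Rabs (/ c * harmonic q - sum_f_R0 frac_coef q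
        - (/ c * (ln x + euler_gamma) - Series frac_coef)) <= 3 / INR (q + 1).
Proof.
  intros Hx. rewrite INR_add2 in Hx. pose proof (INR_add1_pos q) as Hq.
  pose proof (euler_gamma_bounds q) as Hgamma. unfold euler_seq in Hgamma.
  pose proof (Series_partial_sum_bounds frac_coef q frac_coef_bounds) as Hser.
  rewrite INR_add2 in Hser.
  set (r := / INR (q + 1)) in *.
  assert (Hr : 0 < r) by (apply Rinv_0_lt_compat; lra).
  assert (Hr2 : / (INR (q + 1) + 1) <= r) by (apply Rinv_le_contravar; lra).
  assert (Hln : 0 <= ln x - ln (INR (q + 1)) <= 2 * r).
  { split; [assert (ln (INR (q + 1)) <= ln x) by (apply ln_le; lra); lra|].
    pose proof (ln_sub_le_div_sub1 (INR (q + 1)) x Hq ltac:(lra)).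
    replace (x / INR (q + 1) - 1) with ((x - INR (q + 1)) * r) in * by (unfold r; field; lra).
    nra. }
  assert (Hic : 0 < / c < 1).
  { split; [apply Rinv_0_lt_compat; lra|]. rewrite <- Rinv_1. apply Rinv_lt_contravar; lra. }
  set (D := harmonic q - ln (INR (q + 1)) - euler_gamma).
  set (L := ln x - ln (INR (q + 1))) in Hln.
  replace (/ c * harmonic q - sum_f_R0 frac_coef q
           - (/ c * (ln x + euler_gamma) - Series frac_coef))
    with (/ c * (D - L) + (Series frac_coef - sum_f_R0 frac_coef q)) by (unfold D, L; ring).
  assert (- 2 * r <= / c * (D - L) <= r) by (unfold D in *; destruct Hic; split; nra).
  unfold Rdiv. apply Rabs_le. fold r. lra.
Qed.

End BeattyIntegral.

Theorem lemma9 (c : R) (hc1 : 1 < c) (hirr : irrational c) :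
  exists C M : R, 0 <= C /\
    forall m : nat, (1 <= m)%nat -> M <= INR m ->
      Rabs (RInt (fun t => fl (/ c * (fl t + 1)) / (t ^ 2)) 1 (fl (c * INR m))
            - (/ c * (ln (INR m) + ln c + euler_gamma)
               - Series (fun n : nat => frc (/ c * (INR (n + 1) + 1)) /
                                        (INR (n + 1) * INR (n + 2)))))
      <= C / INR m.
Proof.
  exists 6, 4. split; [lra|]. intros m _ Hm.
  destruct (fl_nat_ge2 (c * INR m) ltac:(nra)) as [q [Hfl Hx]].
  change (fun t => fl (/ c * (fl t + 1)) / t ^ 2) with (beatty_integrand c).
  change (fun n : nat => _) with (frac_coef c).
  rewrite Hfl, (RInt_beatty_nat c hc1).
  replace (ln (INR m) + ln c) with (ln (c * INR m)) by (rewrite ln_mult by lra; ring).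
  eapply Rle_trans; [exact (beatty_error_bound c hc1 q _ Hx)|].
  rewrite INR_add2 in Hx.
  assert (Hq : INR m <= 2 * INR (q + 1)) by nra.
  unfold Rdiv. replace (3 * / INR (q + 1)) with (6 * / (2 * INR (q + 1))) by (field; lra).
  apply Rmult_le_compat_l; [lra|]. apply Rinv_le_contravar; lra.
Qed.
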